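(* Let $a\ge1$ be an integer and $R>0$. For $\zeta\in D^a_R$ the function $\mathcal{R}^a(\zeta)(t)=\zeta(t)t^a+a\int_t^\infty\zeta(s)s^{a-1}ds$, $t>0$, extends continuously to $[0,\infty)$, and the resulting map $\mathcal{R}^a:D^a_R\to C_{c,R}([0,\infty))$ is a topological isomorphism (a continuous linear bijection with continuous inverse).
   Context: $C_b((0,\infty))$: continuous functions on $(0,\infty)$ with support bounded above. $D^a_R$: the set of $\zeta\in C_b((0,\infty))$ with support in $(0,R]$, $\lim_{t\to0}t^a\zeta(t)=0$, and $\lim_{t\to0}\int_t^\infty\zeta(r)r^{a-1}dr$ existing and finite, with norm $\|\zeta\|_{D^a}=\sup_{t>0}t^a|\zeta(t)|+\sup_{t>0}|\int_t^\infty\zeta(r)r^{a-1}dr|$. $C_{c,R}([0,\infty))$: continuous functions on $[0,\infty)$ supported in $[0,R]$, with the maximum norm. *)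

From Stdlib Require Import Reals Lra.
From Coquelicot Require Import Coquelicot.
Open Scope R_scope.

(* Functions on (0,oo) (resp. [0,oo)) are represented as functions R -> R,
   normalised to vanish off the domain, so that equality of elements is
   equality of functions. *)

(* For zeta supported in (0,Rb]:  \int_t^oo zeta(r) r^(a-1) dr = \int_t^Rb ... *)
Definition Dint (a : nat) (Rb : R) (z : R -> R) (t : R) : R :=
  RInt (fun r => z r * r ^ (a - 1)) t Rb.

Definition inD (a : nat) (Rb : R) (z : R -> R) : Prop :=
  (forall t, 0 < t -> continuous z t) /\
  (forall t, t <= 0 -> z t = 0) /\
  (forall t, Rb < t -> z t = 0) /\
  filterlim (fun t => t ^ a * z t) (at_right 0) (locally 0) /\
  (exists L : R, filterlim (Dint a Rb z) (at_right 0) (locally L)).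

Definition normD (a : nat) (Rb : R) (z : R -> R) : R :=
  real (Lub_Rbar (fun x => exists t, 0 < t /\ x = t ^ a * Rabs (z t))) +
  real (Lub_Rbar (fun x => exists t, 0 < t /\ x = Rabs (Dint a Rb z t))).

Definition inC (Rb : R) (f : R -> R) : Prop :=
  (forall t, 0 < t -> continuous f t) /\
  filterlim f (at_right 0) (locally (f 0)) /\
  (forall t, Rb < t -> f t = 0) /\
  (forall t, t < 0 -> f t = 0).

Definition normC (f : R -> R) : R :=
  real (Lub_Rbar (fun x => exists t, 0 <= t /\ x = Rabs (f t))).

Definition Rpos (a : nat) (Rb : R) (z : R -> R) (t : R) : R :=
  z t * t ^ a + INR a * Dint a Rb z t.

(* The extension to [0,oo): value at 0 is the limit of Rpos along 1/(n+1)
   (the theorem asserts that the extension is continuous at 0 via inC). *)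
Definition Rmap (a : nat) (Rb : R) (z : R -> R) (t : R) : R :=
  if Rlt_dec 0 t then Rpos a Rb z t
  else if Req_EM_T t 0 then real (Lim_seq (fun n => Rpos a Rb z (/ INR (S n))))
  else 0.

(* Write D(t) = \int_t^R zeta(r) r^(a-1) dr.  Then
   R^a(zeta)(t) = zeta(t) t^a + a D(t) = - t^(a+1) (t^-a D)'(t), so
   D(t) = t^a \int_t^R R^a(zeta)(s) s^(-a-1) ds.  This gives injectivity, the
   inverse f |-> f(t) t^-a - a \int_t^R f(s) s^(-a-1) ds, and |a D| <= |R^a zeta|_oo,
   hence |zeta|_{D^a} <= 3 |R^a zeta|_oo; conversely |R^a zeta|_oo <= (a+1) |zeta|_{D^a}.
   The inverse lands in D^a because t^a \int_t^R f(s) s^(-a-1) ds -> f(0)/a as t -> 0+. *)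

From Stdlib Require Import Reals Lra Lia FunctionalExtensionality.
From Coquelicot Require Import Coquelicot.
Open Scope R_scope.

Lemma filterlim_Rplus {T : Type} {F : (T -> Prop) -> Prop} {FF : Filter F}
  (f g : T -> R) (l m : R) :
  filterlim f F (locally l) -> filterlim g F (locally m) ->
  filterlim (fun x => f x + g x) F (locally (l + m)).
Proof.
  intros Hf Hg.
  exact (filterlim_comp_2 f g Rplus Hf Hg
           (filterlim_plus (K := R_AbsRing) (V := R_NormedModule) l m)).
Qed.

Lemma filterlim_Rmult_l {T : Type} {F : (T -> Prop) -> Prop} {FF : Filter F}
  (f : T -> R) (c l : R) :
  filterlim f F (locally l) -> filterlim (fun x => c * f x) F (locally (c * l)).
Proof.
  intros Hf.
  exact (filterlim_comp _ _ _ f (fun y => c * y) _ _ _ Hf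
           (filterlim_scal_r (K := R_AbsRing) (V := R_NormedModule) c l)).
Qed.

Lemma filterlim_at_right0_ext (f g : R -> R) (l : R) :
  (forall t, 0 < t -> f t = g t) ->
  filterlim f (at_right 0) (locally l) -> filterlim g (at_right 0) (locally l).
Proof.
  intros E. apply filterlim_ext_loc.
  exists (mkposreal 1 Rlt_0_1). intros t _ Ht. now apply E.
Qed.

Lemma filterlim_at_right0_continuous (f : R -> R) :
  continuous f 0 -> filterlim f (at_right 0) (locally (f 0)).
Proof. intros Hf. exact (filterlim_filter_le_1 _ (filter_le_within (F := locally 0) _) Hf). Qed.

Lemma filterlim_at_right0_locally (f : R -> R) (l : R) :
  filterlim f (at_right 0) (locally l) <->
  forall eps, 0 < eps -> exists d, 0 < d /\ forall t, 0 < t < d -> Rabs (f t - l) < eps.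
Proof.
  rewrite filterlim_locally. split.
  - intros H eps Heps. destruct (H (mkposreal eps Heps)) as [d Hd].
    exists d. split; [apply cond_pos|]. intros t Ht. apply Hd; [|lra].
    change (Rabs (t - 0) < d). rewrite Rminus_0_r, Rabs_pos_eq; lra.
  - intros H [eps Heps]. destruct (H eps Heps) as [d [Hd Hfd]].
    exists (mkposreal d Hd). intros t Ht Ht0. apply Hfd. split; [lra|].
    change (Rabs (t - 0) < d) in Ht. rewrite Rminus_0_r, Rabs_pos_eq in Ht; lra.
Qed.

Lemma filterlim_inv_INR_S : filterlim (fun n => / INR (S n)) eventually (at_right 0).
Proof.
  intros P [d Hd].
  destruct (nfloor_ex (/ d)) as [N HN]. { left. apply Rinv_0_lt_compat, cond_pos. }
  exists N. intros n Hn.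
  assert (HS : / d < INR (S n)).
  { apply Rlt_le_trans with (INR N + 1); [lra|]. rewrite <- S_INR. apply le_INR. lia. }
  assert (Hpos : 0 < INR (S n)) by (apply lt_0_INR; lia).
  apply Hd.
  - change (Rabs (/ INR (S n) - 0) < d).
    rewrite Rminus_0_r, Rabs_pos_eq by (left; apply Rinv_0_lt_compat; lra).
    rewrite <- (Rinv_inv d). apply Rinv_lt_contravar; [|lra].
    apply Rmult_lt_0_compat; [apply Rinv_0_lt_compat, cond_pos | lra].
  - apply Rinv_0_lt_compat; lra.
Qed.

Lemma Lim_seq_at_right0 (f : R -> R) (l : R) :
  filterlim f (at_right 0) (locally l) -> real (Lim_seq (fun n => f (/ INR (S n)))) = l.
Proof.
  intros Hf. rewrite (is_lim_seq_unique _ l); [reflexivity|].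
  exact (filterlim_comp _ _ _ _ _ _ _ _ filterlim_inv_INR_S Hf).
Qed.

Lemma abs_le_of_filterlim_at_right0 (f : R -> R) (l B : R) :
  filterlim f (at_right 0) (locally l) -> (forall t, 0 < t -> Rabs (f t) <= B) ->
  Rabs l <= B.
Proof.
  intros Hf HB.
  apply (closed_filterlim_loc (F := at_right 0) (fun t => Rabs (f t)) (fun y => y <= B)).
  - exact (filterlim_comp _ _ _ _ _ _ _ _ Hf (continuous_Rabs l)).
  - exists (mkposreal 1 Rlt_0_1). intros t _ Ht. now apply HB.
  - apply closed_le.
Qed.

Lemma Lub_Rbar_real_le (E : R -> Prop) (x M : R) :
  E x -> (forall y, E y -> y <= M) -> real (Lub_Rbar E) <= M.
Proof.
  intros Ex HM. destruct (Lub_Rbar_correct E) as [Hub Hlub].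
  assert (Hle : Rbar_le (Lub_Rbar E) M) by (apply Hlub; intros y Ey; apply HM, Ey).
  assert (Hge : Rbar_le x (Lub_Rbar E)) by (apply Hub, Ex).
  destruct (Lub_Rbar E); simpl in *; tauto.
Qed.

Lemma le_Lub_Rbar_real (E : R -> Prop) (x M : R) :
  E x -> (forall y, E y -> y <= M) -> x <= real (Lub_Rbar E).
Proof.
  intros Ex HM. destruct (Lub_Rbar_correct E) as [Hub Hlub].
  assert (Hle : Rbar_le (Lub_Rbar E) M) by (apply Hlub; intros y Ey; apply HM, Ey).
  assert (Hge : Rbar_le x (Lub_Rbar E)) by (apply Hub, Ex).
  destruct (Lub_Rbar E); simpl in *; tauto.
Qed.

Definition cont_on_pos (g : R -> R) : Prop := forall s, 0 < s -> continuous g s.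

Lemma cont_on_pos_const (c : R) : cont_on_pos (fun _ => c).
Proof. intros s _. apply continuous_const. Qed.

Lemma cont_on_pos_plus (f g : R -> R) :
  cont_on_pos f -> cont_on_pos g -> cont_on_pos (fun s => f s + g s).
Proof. intros Hf Hg s Hs. apply (continuous_plus f g); auto. Qed.

Lemma cont_on_pos_mult (f g : R -> R) :
  cont_on_pos f -> cont_on_pos g -> cont_on_pos (fun s => f s * g s).
Proof. intros Hf Hg s Hs. apply (continuous_mult f g); auto. Qed.

Lemma cont_on_pos_abs (f : R -> R) : cont_on_pos f -> cont_on_pos (fun s => Rabs (f s)).
Proof. intros Hf s Hs. apply continuous_Rabs_comp; auto. Qed.

Lemma cont_on_pos_of_derive (f : R -> R) :
  (forall s, 0 < s -> ex_derive f s) -> cont_on_pos f.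
Proof. intros Hf s Hs. apply (ex_derive_continuous (K := R_AbsRing) (V := R_NormedModule)); auto. Qed.

Lemma cont_on_pos_pow (n : nat) : cont_on_pos (fun s => s ^ n).
Proof. apply cont_on_pos_of_derive. intros s _. auto_derive. exact I. Qed.

Lemma is_derive_inv_pow (m : nat) (x : R) :
  0 < x -> is_derive (fun s => / s ^ m) x (- INR m / x ^ S m).
Proof.
  intros Hx. pose proof (pow_lt x m Hx).
  replace (- INR m / x ^ S m) with (- (INR m * 1 * x ^ pred m) / (x ^ m) ^ 2).
  - apply (is_derive_inv (fun s => s ^ m)); [|lra].
    apply (is_derive_pow (fun s => s)), (is_derive_id (K := R_AbsRing)).
  - destruct m as [|j]; simpl; [field; lra|].
    field. split; [apply pow_nonzero|]; lra.
Qed.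

Lemma cont_on_pos_inv_pow (n : nat) : cont_on_pos (fun s => / s ^ n).
Proof.
  apply cont_on_pos_of_derive. intros s Hs. eexists. now apply is_derive_inv_pow.
Qed.

Lemma cont_on_pos_div_pow (f : R -> R) (n : nat) :
  cont_on_pos f -> cont_on_pos (fun s => f s / s ^ n).
Proof. intros Hf. apply cont_on_pos_mult; [exact Hf | apply cont_on_pos_inv_pow]. Qed.

Lemma cont_on_pos_ext (f g : R -> R) :
  (forall s, 0 < s -> f s = g s) -> cont_on_pos f -> cont_on_pos g.
Proof.
  intros E Hf s Hs. apply (continuous_ext_loc g f); [|now apply Hf].
  exists (mkposreal (s / 2) ltac:(lra)). intros y Hy.
  apply Rabs_lt_between' in Hy. simpl in Hy. apply E. lra.
Qed.

Lemma bounded_of_filterlim_at_right0 (g : R -> R) (l b : R) :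
  0 < b -> cont_on_pos g -> filterlim g (at_right 0) (locally l) ->
  exists M, forall t, 0 < t <= b -> Rabs (g t) <= M.
Proof.
  intros Hb Hg Hl.
  destruct (proj1 (filterlim_at_right0_locally g l) Hl 1 Rlt_0_1) as [d [Hd Hnear]].
  set (c := Rmin (d / 2) b).
  assert (Hc : 0 < c <= b) by (unfold c; split; [apply Rmin_glb_lt|apply Rmin_r]; lra).
  destruct (continuity_ab_maj (fun t => Rabs (g t)) c b) as [x [Hmax _]]; [lra| |].
  { intros s Hs. apply continuity_pt_filterlim, continuous_Rabs_comp, Hg. lra. }
  exists (Rmax (Rabs l + 1) (Rabs (g x))). intros t Ht.
  destruct (Rlt_le_dec t c) as [Htc|Htc].
  - assert (Htd : t < d) by (pose proof (Rmin_l (d / 2) b); unfold c in Htc; lra).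
    specialize (Hnear t (conj (proj1 Ht) Htd)). pose proof (Rabs_triang_inv (g t) l).
    apply Rle_trans with (Rabs l + 1); [lra|apply Rmax_l].
  - apply Rle_trans with (Rabs (g x)); [apply Hmax; lra|apply Rmax_r].
Qed.

Lemma bounded_of_filterlim_at_right0_support (g : R -> R) (l b : R) :
  0 < b -> cont_on_pos g -> filterlim g (at_right 0) (locally l) ->
  (forall t, b < t -> g t = 0) -> exists M, forall t, 0 < t -> Rabs (g t) <= M.
Proof.
  intros Hb Hg Hl Hsupp.
  destruct (bounded_of_filterlim_at_right0 g l b Hb Hg Hl) as [M HM].
  exists M. intros t Ht. destruct (Rle_lt_dec t b) as [Htb|Htb]; [now apply HM|].
  rewrite Hsupp, Rabs_R0 by exact Htb. apply Rle_trans with (Rabs (g b)); [apply Rabs_pos|].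
  apply HM; lra.
Qed.

Lemma ex_RInt_pos (g : R -> R) (t u : R) :
  cont_on_pos g -> 0 < t -> 0 < u -> ex_RInt g t u.
Proof.
  intros Hg Ht Hu. apply (ex_RInt_continuous (V := R_CompleteNormedModule)).
  intros s Hs. apply Hg. pose proof (Rmin_glb_lt t u 0 Ht Hu). lra.
Qed.

Lemma is_derive_RInt_lower (g : R -> R) (u x : R) :
  cont_on_pos g -> 0 < u -> 0 < x -> is_derive (fun t => RInt g t u) x (- g x).
Proof.
  intros Hg Hu Hx. apply (is_derive_RInt' (V := R_NormedModule) g _ x u); [|now apply Hg].
  exists (mkposreal (x / 2) ltac:(lra)). intros y Hy.
  apply Rabs_lt_between' in Hy. simpl in Hy.
  apply (RInt_correct (V := R_CompleteNormedModule)), ex_RInt_pos; auto; lra.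
Qed.

Lemma RInt_derive_pos (F g : R -> R) (t u : R) :
  (forall x, 0 < x -> is_derive F x (g x)) -> cont_on_pos g -> 0 < t -> 0 < u ->
  RInt g t u = F u - F t :> R.
Proof.
  intros HF Hg Ht Hu. pose proof (Rmin_glb_lt t u 0 Ht Hu).
  apply is_RInt_unique, (is_RInt_derive (V := R_CompleteNormedModule) F g);
    intros x Hx; [apply HF | apply Hg]; lra.
Qed.

Lemma RInt_zero_on (g : R -> R) (t u : R) :
  (forall x, Rmin t u < x < Rmax t u -> g x = 0) -> RInt g t u = 0.
Proof.
  intros H. rewrite (RInt_ext g (fun _ => 0)) by exact H.
  rewrite RInt_const. apply Rmult_0_r.
Qed.

Lemma RInt_inv_pow (n : nat) (t u : R) : 0 < t -> 0 < u ->
  RInt (fun s => / s ^ S (S n)) t u = (/ t ^ S n - / u ^ S n) / INR (S n) :> R.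
Proof.
  intros Ht Hu. pose proof (lt_0_INR (S n) (Nat.lt_0_succ n)) as Hn.
  remember (INR (S n)) as A eqn:HA.
  rewrite (RInt_derive_pos (fun s => - / s ^ S n / A)); auto.
  - field. repeat split; try apply pow_nonzero; lra.
  - intros x Hx. pose proof (pow_lt x (S n) Hx) as Hxn. simpl in Hxn.
    auto_derive; [lra|].
    change (match n with 0%nat => 1 | S _ => INR n + 1 end) with (INR (S n)).
    rewrite <- HA. simpl. field. repeat split; try apply pow_nonzero; lra.
  - apply cont_on_pos_inv_pow.
Qed.

Lemma abs_weighted_RInt_le (n : nat) (b c1 c2 t : R) (g : R -> R) :
  cont_on_pos g -> 0 <= c1 -> 0 <= c2 -> 0 < t <= b ->
  (forall s, t < s < b -> Rabs (g s) <= c1 + c2 * s ^ S (S n)) ->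
  Rabs (t ^ S n * RInt (fun s => g s / s ^ S (S n)) t b)
    <= c1 / INR (S n) + c2 * t ^ S n * b.
Proof.
  intros Hg Hc1 Hc2 Ht Hgb.
  pose proof (lt_0_INR (S n) (Nat.lt_0_succ n)) as Hn.
  pose proof (pow_lt t (S n) (proj1 Ht)) as Htn.
  pose proof (pow_lt b (S n) ltac:(lra)) as Hbn.
  assert (Hmaj : is_RInt (fun s => c1 * / s ^ S (S n) + c2) t b
                   (c1 * ((/ t ^ S n - / b ^ S n) / INR (S n)) + (b - t) * c2)).
  { apply (is_RInt_plus (V := R_NormedModule) (fun s => c1 * / s ^ S (S n)) (fun _ => c2)).
    - apply (is_RInt_scal (V := R_NormedModule)). rewrite <- RInt_inv_pow by lra.
      apply (RInt_correct (V := R_CompleteNormedModule)), ex_RInt_pos; try lra.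
      apply cont_on_pos_inv_pow.
    - apply (is_RInt_const (V := R_NormedModule)). }
  assert (Hg' : cont_on_pos (fun s => g s / s ^ S (S n))) by now apply cont_on_pos_div_pow.
  assert (Hint : RInt (fun s => Rabs (g s / s ^ S (S n))) t b
                 <= c1 * ((/ t ^ S n - / b ^ S n) / INR (S n)) + (b - t) * c2).
  { rewrite <- (is_RInt_unique _ _ _ _ Hmaj).
    apply RInt_le; [lra | apply ex_RInt_pos; [now apply cont_on_pos_abs | lra | lra] | eexists; exact Hmaj |].
    intros s Hs. pose proof (pow_lt s (S (S n)) ltac:(lra)) as Hsn.
    unfold Rdiv. rewrite Rabs_mult, (Rabs_pos_eq (/ _)) by (left; now apply Rinv_0_lt_compat).
    apply Rmult_le_reg_r with (s ^ S (S n)); [exact Hsn|].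
    rewrite Rmult_assoc, Rinv_l, Rmult_plus_distr_r, Rmult_assoc, Rinv_l by lra.
    specialize (Hgb s Hs). lra. }
  pose proof (abs_RInt_le _ t b (proj2 Ht) (ex_RInt_pos _ t b Hg' (proj1 Ht) ltac:(lra))).
  rewrite Rabs_mult, (Rabs_pos_eq (t ^ S n)) by lra.
  apply Rle_trans with (t ^ S n * (c1 * ((/ t ^ S n - / b ^ S n) / INR (S n)) + (b - t) * c2)).
  - apply Rmult_le_compat_l; lra.
  - assert (Hdrop : 0 <= c1 / INR (S n) * (t ^ S n / b ^ S n) + c2 * t ^ S n * t).
    { apply Rplus_le_le_0_compat; apply Rmult_le_pos; try apply Rmult_le_pos;
        try (left; apply Rinv_0_lt_compat); lra. }
    replace (t ^ S n * (c1 * ((/ t ^ S n - / b ^ S n) / INR (S n)) + (b - t) * c2))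
      with (c1 / INR (S n) + c2 * t ^ S n * b
            - (c1 / INR (S n) * (t ^ S n / b ^ S n) + c2 * t ^ S n * t)) by (field; lra).
    lra.
Qed.

Lemma abs_le_small_plus_pow (n : nat) (b eps : R) (g : R -> R) :
  0 < b -> 0 < eps -> cont_on_pos g -> filterlim g (at_right 0) (locally 0) ->
  exists c, 0 <= c /\ forall s, 0 < s < b -> Rabs (g s) <= eps + c * s ^ n.
Proof.
  intros Hb Heps Hg Hg0.
  destruct (proj1 (filterlim_at_right0_locally g 0) Hg0 eps Heps) as [d [Hd Hgd]].
  destruct (bounded_of_filterlim_at_right0 g 0 b Hb Hg Hg0) as [M HM].
  assert (HM0 : 0 <= M) by (apply Rle_trans with (Rabs (g b)); [apply Rabs_pos | apply HM; lra]).
  set (e := Rmin d b).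
  assert (He : 0 < e <= d) by (unfold e; split; [apply Rmin_glb_lt | apply Rmin_l]; lra).
  pose proof (pow_lt e n (proj1 He)) as Hen.
  exists (M / e ^ n). split; [apply Rmult_le_pos; [lra | left; now apply Rinv_0_lt_compat]|].
  intros s Hs. pose proof (pow_lt s n (proj1 Hs)).
  assert (Hc : 0 <= M / e ^ n * s ^ n)
    by (apply Rmult_le_pos; [apply Rmult_le_pos|]; try (left; apply Rinv_0_lt_compat); lra).
  (* beyond e, |g s| <= M = (M / e^n) e^n <= (M / e^n) s^n *)
  destruct (Rlt_le_dec s e) as [Hse|Hse].
  - specialize (Hgd s ltac:(lra)). rewrite Rminus_0_r in Hgd. lra.
  - apply Rle_trans with (M / e ^ n * s ^ n); [|lra].
    apply Rle_trans with (M / e ^ n * e ^ n).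
    + unfold Rdiv. rewrite Rmult_assoc, Rinv_l, Rmult_1_r by lra. apply HM. lra.
    + apply Rmult_le_compat_l; [apply Rmult_le_pos; [lra | left; now apply Rinv_0_lt_compat]|].
      apply pow_incr. lra.
Qed.

Lemma weighted_RInt_lim_0 (n : nat) (b : R) (g : R -> R) :
  0 < b -> cont_on_pos g -> filterlim g (at_right 0) (locally 0) ->
  filterlim (fun t => t ^ S n * RInt (fun s => g s / s ^ S (S n)) t b)
    (at_right 0) (locally 0).
Proof.
  intros Hb Hg Hg0. apply filterlim_at_right0_locally. intros eps Heps.
  destruct (abs_le_small_plus_pow (S (S n)) b (eps / 2) g) as [c [Hc Hgc]]; try assumption; [lra|].
  assert (Hpow : filterlim (fun t => t ^ S n) (at_right 0) (locally 0)).
  { replace 0 with (0 ^ S n) at 2 by (simpl; ring).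
    apply filterlim_at_right0_continuous.
    apply (ex_derive_continuous (K := R_AbsRing) (V := R_NormedModule)). auto_derive. exact I. }
  pose proof (Rmult_le_pos c b Hc ltac:(lra)) as Hcb.
  destruct (proj1 (filterlim_at_right0_locally _ 0) Hpow (eps / (2 * (c * b + 1))))
    as [d [Hd Hpowd]]; [apply Rdiv_lt_0_compat; lra|].
  exists (Rmin b d). split; [apply Rmin_glb_lt; lra|]. intros t [Ht Htd].
  pose proof (Rmin_l b d). pose proof (Rmin_r b d).
  specialize (Hpowd t ltac:(lra)). pose proof (pow_lt t (S n) Ht) as Htn.
  rewrite Rminus_0_r, Rabs_pos_eq in Hpowd by lra.
  assert (HA : eps / 2 / INR (S n) <= eps / 2).
  { apply Rmult_le_reg_r with (INR (S n)); [apply lt_0_INR; lia|].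
    unfold Rdiv at 1. rewrite Rmult_assoc, Rinv_l by (apply not_0_INR; lia).
    rewrite S_INR. pose proof (pos_INR n). nra. }
  assert (Hrest : t ^ S n * (c * b + 1) < eps / 2).
  { apply Rmult_lt_reg_r with (/ (c * b + 1)); [apply Rinv_0_lt_compat; lra|].
    rewrite Rmult_assoc, Rinv_r, Rmult_1_r by lra.
    replace (eps / 2 * / (c * b + 1)) with (eps / (2 * (c * b + 1))) by (field; lra).
    exact Hpowd. }
  rewrite Rminus_0_r. eapply Rle_lt_trans.
  - apply (abs_weighted_RInt_le n b (eps / 2) c t g); try lra; [exact Hg|].
    intros s Hs. apply Hgc. lra.
  - lra.
Qed.

Lemma weighted_RInt_lim (n : nat) (b l : R) (f : R -> R) :
  0 < b -> cont_on_pos f -> filterlim f (at_right 0) (locally l) ->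
  filterlim (fun t => t ^ S n * RInt (fun s => f s / s ^ S (S n)) t b)
    (at_right 0) (locally (l / INR (S n))).
Proof.
  intros Hb Hf Hl.
  pose proof (lt_0_INR (S n) (Nat.lt_0_succ n)) as Hn.
  pose proof (pow_lt b (S n) Hb) as Hbn.
  set (h := fun t => l / INR (S n) * (1 - t ^ S n / b ^ S n)).
  assert (Hf0 : cont_on_pos (fun s => f s - l))
    by (apply cont_on_pos_plus; [exact Hf | apply cont_on_pos_const]).
  apply (filterlim_at_right0_ext
           (fun t => t ^ S n * RInt (fun s => (f s - l) / s ^ S (S n)) t b + h t)).
  - intros t Ht. pose proof (pow_lt t (S n) Ht).
    assert (Hsplit : RInt (fun s => f s / s ^ S (S n)) t b
                     = RInt (fun s => (f s - l) / s ^ S (S n)) t b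
                       + l * RInt (fun s => / s ^ S (S n)) t b :> R).
    { apply is_RInt_unique.
      apply (is_RInt_ext (fun s => plus ((f s - l) / s ^ S (S n)) (scal l (/ s ^ S (S n))))).
      { intros s _. unfold plus, scal; simpl; unfold mult; simpl. unfold Rdiv. ring. }
      apply (is_RInt_plus (V := R_NormedModule)); [|apply (is_RInt_scal (V := R_NormedModule))];
        apply (RInt_correct (V := R_CompleteNormedModule)), ex_RInt_pos; try lra.
      - now apply cont_on_pos_div_pow.
      - apply cont_on_pos_inv_pow. }
    rewrite Hsplit, RInt_inv_pow by lra. unfold h. field.
    repeat split; try apply pow_nonzero; lra.
  - replace (l / INR (S n)) with (0 + h 0)
      by (unfold h; rewrite pow_i by lia; field; repeat split; lra).
    apply filterlim_Rplus.
    + apply weighted_RInt_lim_0; [exact Hb | exact Hf0 |].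
      replace (locally 0) with (locally (l + - l)) by now rewrite Rplus_opp_r.
      exact (filterlim_Rplus f (fun _ => - l) l (- l) Hl (filterlim_const _)).
    + apply filterlim_at_right0_continuous.
      apply (ex_derive_continuous (K := R_AbsRing) (V := R_NormedModule)).
      unfold h. auto_derive. lra.
Qed.

Lemma normC_le (f : R -> R) (B : R) :
  (forall t, 0 <= t -> Rabs (f t) <= B) -> normC f <= B.
Proof.
  intros HB. apply (Lub_Rbar_real_le _ (Rabs (f 0))); [now exists 0; split; [lra|]|].
  intros y [t [Ht ->]]. now apply HB.
Qed.

Lemma le_Lub_Rbar_pos (h g : R -> R) (l b : R) :
  0 < b -> cont_on_pos g -> filterlim g (at_right 0) (locally l) ->
  (forall t, b < t -> g t = 0) -> (forall t, 0 < t -> h t = Rabs (g t)) ->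
  forall t, 0 < t -> h t <= real (Lub_Rbar (fun x => exists s, 0 < s /\ x = h s)).
Proof.
  intros Hb Hg Hl Hsupp Hh t Ht.
  destruct (bounded_of_filterlim_at_right0_support g l b Hb Hg Hl Hsupp) as [M HM].
  apply (le_Lub_Rbar_real _ _ M); [now exists t|].
  intros y [s [Hs ->]]. rewrite Hh by exact Hs. now apply HM.
Qed.

Lemma abs_le_normC (Rb : R) (f : R -> R) :
  0 < Rb -> inC Rb f -> forall t, 0 <= t -> Rabs (f t) <= normC f.
Proof.
  intros HR [Hc [H0 [Hsupp _]]] t Ht.
  destruct (bounded_of_filterlim_at_right0_support f (f 0) Rb HR Hc H0 Hsupp) as [M HM].
  apply (le_Lub_Rbar_real _ _ (Rmax M (Rabs (f 0)))); [now exists t|].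
  intros y [s [Hs ->]]. destruct (Req_dec s 0) as [->|Hs0]; [apply Rmax_r|].
  apply Rle_trans with M; [apply HM; lra | apply Rmax_l].
Qed.

Lemma Rmap_pos (a : nat) (Rb : R) (z : R -> R) (t : R) :
  0 < t -> Rmap a Rb z t = Rpos a Rb z t.
Proof. intros Ht. unfold Rmap. destruct (Rlt_dec 0 t); [reflexivity | lra]. Qed.

Lemma Rmap_neg (a : nat) (Rb : R) (z : R -> R) (t : R) : t < 0 -> Rmap a Rb z t = 0.
Proof.
  intros Ht. unfold Rmap. destruct (Rlt_dec 0 t); [lra|].
  destruct (Req_EM_T t 0); [lra | reflexivity].
Qed.

Lemma Rmap_0 (a : nat) (Rb : R) (z : R -> R) (l : R) :
  filterlim (Rpos a Rb z) (at_right 0) (locally l) -> Rmap a Rb z 0 = l.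
Proof.
  intros Hl. unfold Rmap. destruct (Rlt_dec 0 0); [lra|].
  destruct (Req_EM_T 0 0); [now apply Lim_seq_at_right0 | lra].
Qed.

Section Transform.

Variables (k : nat) (Rb : R).
Hypothesis Rb_pos : 0 < Rb.
Local Notation a := (S k).

Lemma Dint_S (w : R -> R) (t : R) : Dint a Rb w t = RInt (fun r => w r * r ^ k) t Rb.
Proof. unfold Dint. now rewrite Nat.sub_1_r. Qed.

Lemma is_derive_Dint (w : R -> R) (x : R) :
  cont_on_pos w -> 0 < x -> is_derive (Dint a Rb w) x (- (w x * x ^ k)).
Proof.
  intros Hw Hx.
  apply (is_derive_ext (fun t => RInt (fun r => w r * r ^ k) t Rb)); [intros; now rewrite Dint_S|].
  apply (is_derive_RInt_lower (fun r => w r * r ^ k)); [|exact Rb_pos|exact Hx].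
  apply cont_on_pos_mult; [exact Hw | apply cont_on_pos_pow].
Qed.

Lemma cont_on_pos_Dint (w : R -> R) : cont_on_pos w -> cont_on_pos (Dint a Rb w).
Proof.
  intros Hw. apply cont_on_pos_of_derive. intros s Hs. eexists. now apply is_derive_Dint.
Qed.

Lemma cont_on_pos_Rpos (w : R -> R) : cont_on_pos w -> cont_on_pos (Rpos a Rb w).
Proof.
  intros Hw. apply cont_on_pos_plus.
  - apply cont_on_pos_mult; [exact Hw | apply cont_on_pos_pow].
  - apply cont_on_pos_mult; [apply cont_on_pos_const | now apply cont_on_pos_Dint].
Qed.

Lemma Dint_beyond (w : R -> R) (t : R) :
  (forall s, Rb < s -> w s = 0) -> Rb < t -> Dint a Rb w t = 0.
Proof.
  intros Hw Ht. rewrite Dint_S. apply RInt_zero_on. intros x Hx.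
  rewrite Rmin_right, Rmax_left in Hx by lra. rewrite Hw by lra. ring.
Qed.

Lemma Dint_linear (z1 z2 : R -> R) (c t : R) :
  cont_on_pos z1 -> cont_on_pos z2 -> 0 < t ->
  Dint a Rb (fun s => z1 s + c * z2 s) t = Dint a Rb z1 t + c * Dint a Rb z2 t.
Proof.
  intros H1 H2 Ht. rewrite !Dint_S. apply is_RInt_unique.
  apply (is_RInt_ext (fun r => plus (z1 r * r ^ k) (scal c (z2 r * r ^ k)))).
  { intros r _. unfold plus, scal; simpl; unfold mult; simpl. ring. }
  apply (is_RInt_plus (V := R_NormedModule)); [|apply (is_RInt_scal (V := R_NormedModule))];
    apply (RInt_correct (V := R_CompleteNormedModule)), ex_RInt_pos; auto;
    apply cont_on_pos_mult; auto; apply cont_on_pos_pow.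
Qed.

Lemma Rpos_linear (z1 z2 : R -> R) (c t : R) :
  cont_on_pos z1 -> cont_on_pos z2 -> 0 < t ->
  Rpos a Rb (fun s => z1 s + c * z2 s) t = Rpos a Rb z1 t + c * Rpos a Rb z2 t.
Proof. intros H1 H2 Ht. unfold Rpos. rewrite Dint_linear by assumption. ring. Qed.

Lemma inD_linear (z1 z2 : R -> R) (c : R) :
  inD a Rb z1 -> inD a Rb z2 -> inD a Rb (fun s => z1 s + c * z2 s).
Proof.
  intros [Hc1 [Hn1 [Hs1 [H01 [L1 HL1]]]]] [Hc2 [Hn2 [Hs2 [H02 [L2 HL2]]]]].
  assert (Hc : cont_on_pos (fun s => z1 s + c * z2 s)).
  { apply cont_on_pos_plus; [exact Hc1|]. apply cont_on_pos_mult; [apply cont_on_pos_const | exact Hc2]. }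
  split; [exact Hc|]. split; [intros t Ht; rewrite Hn1, Hn2 by exact Ht; ring|].
  split; [intros t Ht; rewrite Hs1, Hs2 by exact Ht; ring|]. split.
  - replace 0 with (0 + c * 0) at 2 by ring.
    apply (filterlim_at_right0_ext (fun t => t ^ a * z1 t + c * (t ^ a * z2 t))); [intros; ring|].
    apply filterlim_Rplus; [exact H01 | now apply filterlim_Rmult_l].
  - exists (L1 + c * L2).
    apply (filterlim_at_right0_ext (fun t => Dint a Rb z1 t + c * Dint a Rb z2 t)).
    + intros t Ht. symmetry. now apply Dint_linear.
    + apply filterlim_Rplus; [exact HL1 | now apply filterlim_Rmult_l].
Qed.

Lemma filterlim_Rpos (z : R -> R) :
  inD a Rb z -> filterlim (Rpos a Rb z) (at_right 0) (locally (Rmap a Rb z 0)).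
Proof.
  intros [_ [_ [_ [H0 [L HL]]]]].
  assert (Hlim : filterlim (Rpos a Rb z) (at_right 0) (locally (0 + INR a * L))).
  { apply (filterlim_at_right0_ext (fun t => t ^ a * z t + INR a * Dint a Rb z t));
      [intros; unfold Rpos; ring|].
    apply filterlim_Rplus; [exact H0 | now apply filterlim_Rmult_l]. }
  now rewrite (Rmap_0 _ _ _ _ Hlim).
Qed.

Lemma Rmap_inC (z : R -> R) : inD a Rb z -> inC Rb (Rmap a Rb z).
Proof.
  intros Hz. pose proof (filterlim_Rpos z Hz) as Hlim.
  destruct Hz as [Hc [_ [Hsupp _]]]. split; [|split; [|split]].
  - apply (cont_on_pos_ext (Rpos a Rb z)); [intros; now rewrite Rmap_pos|].
    now apply cont_on_pos_Rpos.
  - apply (filterlim_at_right0_ext (Rpos a Rb z)); [intros; now rewrite Rmap_pos | exact Hlim].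
  - intros t Ht. rewrite Rmap_pos by lra. unfold Rpos.
    rewrite Hsupp, Dint_beyond by assumption. ring.
  - intros t Ht. now apply Rmap_neg.
Qed.

Lemma Rmap_linear (z1 z2 : R -> R) (c : R) :
  inD a Rb z1 -> inD a Rb z2 ->
  Rmap a Rb (fun s => z1 s + c * z2 s) = (fun t => Rmap a Rb z1 t + c * Rmap a Rb z2 t).
Proof.
  intros Hz1 Hz2. pose proof (proj1 Hz1) as Hc1. pose proof (proj1 Hz2) as Hc2.
  apply functional_extensionality. intros t.
  destruct (Rtotal_order t 0) as [Ht|[->|Ht]].
  - rewrite !Rmap_neg by exact Ht. ring.
  - apply Rmap_0. apply (filterlim_at_right0_ext (fun t => Rpos a Rb z1 t + c * Rpos a Rb z2 t)).
    + intros t Ht. symmetry. now apply Rpos_linear.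
    + apply filterlim_Rplus; [|apply filterlim_Rmult_l]; now apply filterlim_Rpos.
  - rewrite !Rmap_pos by exact Ht. now apply Rpos_linear.
Qed.

Lemma Dint_inversion (w : R -> R) (t : R) :
  cont_on_pos w -> 0 < t ->
  Dint a Rb w t = t ^ a * RInt (fun s => Rpos a Rb w s / s ^ S a) t Rb.
Proof.
  intros Hw Ht. pose proof (pow_lt t a Ht).
  rewrite (RInt_derive_pos (fun s => - (Dint a Rb w s / s ^ a))).
  - replace (Dint a Rb w Rb) with 0
      by (rewrite Dint_S; symmetry; apply (RInt_point (V := R_CompleteNormedModule))).
    field. split; apply pow_nonzero; lra.
  - intros x Hx. pose proof (pow_lt x k Hx).
    evar (d : R). replace (Rpos a Rb w x / x ^ S a) with d.
    + apply (is_derive_opp (fun s => Dint a Rb w s / s ^ a)), (is_derive_mult (K := R_AbsRing)).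
      * now apply is_derive_Dint.
      * now apply is_derive_inv_pow.
      * intros; apply Rmult_comm.
    + unfold d, Rpos, opp, plus, mult; simpl. field. lra.
  - now apply cont_on_pos_div_pow, cont_on_pos_Rpos.
  - exact Ht.
  - exact Rb_pos.
Qed.

Lemma Rmap_inj (z1 z2 : R -> R) :
  inD a Rb z1 -> inD a Rb z2 -> Rmap a Rb z1 = Rmap a Rb z2 -> z1 = z2.
Proof.
  intros [Hc1 [Hn1 _]] [Hc2 [Hn2 _]] E. apply functional_extensionality. intros t.
  destruct (Rle_lt_dec t 0) as [Ht|Ht]; [now rewrite Hn1, Hn2|].
  assert (ER : forall s, 0 < s -> Rpos a Rb z1 s = Rpos a Rb z2 s).
  { intros s Hs. rewrite <- !(Rmap_pos a Rb _ s Hs), E. reflexivity. }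
  assert (ED : Dint a Rb z1 t = Dint a Rb z2 t).
  { rewrite !Dint_inversion by assumption. f_equal. apply RInt_ext. intros x Hx.
    pose proof (Rmin_glb_lt t Rb 0 Ht Rb_pos). rewrite ER by lra. reflexivity. }
  pose proof (pow_lt t a Ht). specialize (ER t Ht). unfold Rpos in ER.
  rewrite ED in ER. apply Rmult_eq_reg_r with (t ^ a); lra.
Qed.

Definition Rmap_inv (f : R -> R) (t : R) : R :=
  if Rlt_dec 0 t then f t / t ^ a - INR a * RInt (fun s => f s / s ^ S a) t Rb else 0.

Lemma Rmap_inv_pos (f : R -> R) (t : R) :
  0 < t -> Rmap_inv f t = f t / t ^ a - INR a * RInt (fun s => f s / s ^ S a) t Rb.
Proof. intros Ht. unfold Rmap_inv. destruct (Rlt_dec 0 t); [reflexivity | lra]. Qed.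

Section Inverse.

Variable f : R -> R.
Hypothesis f_cont : cont_on_pos f.

Let If (t : R) : R := RInt (fun s => f s / s ^ S a) t Rb.

Lemma is_derive_If (x : R) : 0 < x -> is_derive If x (- (f x / x ^ S a)).
Proof.
  intros Hx. apply (is_derive_RInt_lower (fun s => f s / s ^ S a)); [|exact Rb_pos|exact Hx].
  now apply cont_on_pos_div_pow.
Qed.

Lemma cont_on_pos_Rmap_inv : cont_on_pos (Rmap_inv f).
Proof.
  apply (cont_on_pos_ext (fun t => f t / t ^ a + - INR a * If t)).
  { intros t Ht. rewrite Rmap_inv_pos by exact Ht. unfold If. ring. }
  apply cont_on_pos_plus; [now apply cont_on_pos_div_pow|].
  apply cont_on_pos_mult; [apply cont_on_pos_const|].
  apply cont_on_pos_of_derive. intros s Hs. eexists. now apply is_derive_If.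
Qed.

Lemma Dint_Rmap_inv (t : R) : 0 < t -> Dint a Rb (Rmap_inv f) t = t ^ a * If t.
Proof.
  intros Ht. rewrite Dint_S.
  (* Rmap_inv f s * s^k = - (s^a If s)' *)
  rewrite (RInt_derive_pos (fun s => - (s ^ a * If s))).
  - replace (If Rb) with 0
      by (unfold If; symmetry; apply (RInt_point (V := R_CompleteNormedModule))).
    ring.
  - intros x Hx. pose proof (pow_lt x k Hx).
    evar (d : R). replace (Rmap_inv f x * x ^ k) with d.
    + apply (is_derive_opp (fun s => s ^ a * If s)), (is_derive_mult (K := R_AbsRing)).
      * apply (is_derive_pow (fun s => s)), (is_derive_id (K := R_AbsRing)).
      * now apply is_derive_If.
      * intros; apply Rmult_comm.
    + unfold d, opp, plus, mult, one; simpl. rewrite Rmap_inv_pos by exact Hx. unfold If.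
      change (match k with 0%nat => 1 | S _ => INR k + 1 end) with (INR (S k)).
      change (x ^ S k) with (x * x ^ k). change (x ^ S (S k)) with (x * (x * x ^ k)).
      field. lra.
  - apply cont_on_pos_mult; [apply cont_on_pos_Rmap_inv | apply cont_on_pos_pow].
  - exact Ht.
  - exact Rb_pos.
Qed.

Lemma Rpos_Rmap_inv (t : R) : 0 < t -> Rpos a Rb (Rmap_inv f) t = f t.
Proof.
  intros Ht. pose proof (pow_lt t a Ht).
  unfold Rpos. rewrite Dint_Rmap_inv, Rmap_inv_pos by exact Ht. unfold If. field. lra.
Qed.

End Inverse.

Lemma inD_Rmap_inv (f : R -> R) : inC Rb f -> inD a Rb (Rmap_inv f).
Proof.
  intros [Hc [H0 [Hsupp _]]].
  pose proof (weighted_RInt_lim k Rb (f 0) f Rb_pos Hc H0) as HI.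
  pose proof (lt_0_INR a (Nat.lt_0_succ k)) as Ha.
  split; [now apply cont_on_pos_Rmap_inv|]. split; [|split; [|split]].
  - intros t Ht. unfold Rmap_inv. destruct (Rlt_dec 0 t); [lra | reflexivity].
  - intros t Ht. rewrite Rmap_inv_pos, Hsupp by lra.
    rewrite RInt_zero_on; [unfold Rdiv; ring|].
    intros x Hx. rewrite Rmin_right, Rmax_left in Hx by lra. rewrite Hsupp by lra.
    unfold Rdiv. ring.
  - replace 0 with (f 0 + - INR a * (f 0 / INR a)) at 2 by (field; lra).
    apply (filterlim_at_right0_ext
             (fun t => f t + - INR a * (t ^ a * RInt (fun s => f s / s ^ S a) t Rb))).
    + intros t Ht. pose proof (pow_lt t a Ht). rewrite Rmap_inv_pos by exact Ht. field. lra.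
    + apply filterlim_Rplus; [exact H0 | now apply filterlim_Rmult_l].
  - exists (f 0 / INR a).
    apply (filterlim_at_right0_ext _ _ _ (fun t Ht => eq_sym (Dint_Rmap_inv f Hc t Ht)) HI).
Qed.

Lemma Rmap_Rmap_inv (f : R -> R) : inC Rb f -> Rmap a Rb (Rmap_inv f) = f.
Proof.
  intros Hf. pose proof Hf as [Hc [H0 [_ Hneg]]].
  apply functional_extensionality. intros t.
  destruct (Rtotal_order t 0) as [Ht|[->|Ht]].
  - rewrite Rmap_neg, Hneg by exact Ht. reflexivity.
  - apply Rmap_0. apply (filterlim_at_right0_ext f); [|exact H0].
    intros t Ht. symmetry. now apply Rpos_Rmap_inv.
  - rewrite Rmap_pos by exact Ht. now apply Rpos_Rmap_inv.
Qed.

Lemma normC_Rmap_le (w : R -> R) :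
  inD a Rb w -> normC (Rmap a Rb w) <= (INR a + 1) * normD a Rb w.
Proof.
  intros Hw. pose proof (filterlim_Rpos w Hw) as Hlim.
  destruct Hw as [Hc [_ [Hsupp [H0 [L HL]]]]].
  unfold normD.
  set (N1 := real (Lub_Rbar (fun x => exists t, 0 < t /\ x = t ^ a * Rabs (w t)))).
  set (N2 := real (Lub_Rbar (fun x => exists t, 0 < t /\ x = Rabs (Dint a Rb w t)))).
  assert (B1 : forall t, 0 < t -> t ^ a * Rabs (w t) <= N1).
  { apply (le_Lub_Rbar_pos _ (fun t => t ^ a * w t) 0 Rb); try assumption.
    - apply cont_on_pos_mult; [apply cont_on_pos_pow | exact Hc].
    - intros t Ht. rewrite Hsupp by exact Ht. ring.
    - intros t Ht. rewrite Rabs_mult, (Rabs_pos_eq (t ^ a)) by (left; now apply pow_lt).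
      reflexivity. }
  assert (B2 : forall t, 0 < t -> Rabs (Dint a Rb w t) <= N2).
  { apply (le_Lub_Rbar_pos _ (Dint a Rb w) L Rb); try assumption.
    - now apply cont_on_pos_Dint.
    - intros t Ht. now apply Dint_beyond.
    - reflexivity. }
  assert (P1 : 0 <= N1).
  { apply Rle_trans with (1 ^ a * Rabs (w 1)); [|apply B1; lra].
    rewrite pow1, Rmult_1_l. apply Rabs_pos. }
  assert (P2 : 0 <= N2) by (apply Rle_trans with (Rabs (Dint a Rb w 1)); [apply Rabs_pos | apply B2; lra]).
  pose proof (pos_INR a) as Ha.
  assert (Hpos : forall t, 0 < t -> Rabs (Rpos a Rb w t) <= (INR a + 1) * (N1 + N2)).
  { intros t Ht. pose proof (pow_lt t a Ht). unfold Rpos. eapply Rle_trans; [apply Rabs_triang|].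
    rewrite !Rabs_mult, (Rabs_pos_eq (t ^ a)), (Rabs_pos_eq (INR a)) by lra.
    specialize (B1 t Ht). specialize (B2 t Ht).
    pose proof (Rmult_le_compat_l (INR a) _ _ Ha B2). nra. }
  apply normC_le. intros t Ht. destruct (Rle_lt_dec t 0) as [Ht0|Ht0].
  - replace t with 0 by lra. exact (abs_le_of_filterlim_at_right0 _ _ _ Hlim Hpos).
  - rewrite Rmap_pos by exact Ht0. now apply Hpos.
Qed.

Lemma normD_le_normC (w : R -> R) : inD a Rb w -> normD a Rb w <= 3 * normC (Rmap a Rb w).
Proof.
  intros Hw. set (M := normC (Rmap a Rb w)).
  pose proof (abs_le_normC Rb _ Rb_pos (Rmap_inC w Hw)) as HM. fold M in HM.
  destruct Hw as [Hc [_ [Hsupp _]]].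
  assert (HM0 : 0 <= M) by (apply Rle_trans with (Rabs (Rmap a Rb w 0)); [apply Rabs_pos | apply HM; lra]).
  pose proof (lt_0_INR a (Nat.lt_0_succ k)) as Ha.
  assert (Ha1 : 1 <= INR a) by (rewrite S_INR; pose proof (pos_INR k); lra).
  assert (HD : forall t, 0 < t -> INR a * Rabs (Dint a Rb w t) <= M).
  { intros t Ht. destruct (Rle_lt_dec t Rb) as [HtR|HtR].
    - rewrite Dint_inversion by assumption.
      replace M with (INR a * (M / INR a + 0 * t ^ a * Rb)) by (field; lra).
      apply Rmult_le_compat_l; [lra|].
      apply abs_weighted_RInt_le; try lra; [now apply cont_on_pos_Rpos|].
      intros s Hs. rewrite <- Rmap_pos by lra. rewrite Rmult_0_l, Rplus_0_r. apply HM. lra.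
    - rewrite Dint_beyond, Rabs_R0, Rmult_0_r by assumption. exact HM0. }
  unfold normD. apply Rle_trans with (2 * M + M); [apply Rplus_le_compat|lra].
  - apply (Lub_Rbar_real_le _ (1 ^ a * Rabs (w 1))); [exists 1; split; [lra | reflexivity]|].
    intros y [t [Ht ->]]. pose proof (pow_lt t a Ht).
    replace (t ^ a * Rabs (w t)) with (Rabs (Rmap a Rb w t - INR a * Dint a Rb w t)).
    + eapply Rle_trans; [apply Rabs_triang|].
      rewrite Rabs_Ropp, Rabs_mult, (Rabs_pos_eq (INR a)) by lra.
      specialize (HD t Ht). specialize (HM t ltac:(lra)). lra.
    + rewrite Rmap_pos by exact Ht. unfold Rpos.
      replace (w t * t ^ a + INR a * Dint a Rb w t - INR a * Dint a Rb w t) with (w t * t ^ a) by ring.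
      rewrite Rabs_mult, (Rabs_pos_eq (t ^ a)) by lra. ring.
  - apply (Lub_Rbar_real_le _ (Rabs (Dint a Rb w 1))); [exists 1; split; [lra | reflexivity]|].
    intros y [t [Ht ->]]. specialize (HD t Ht).
    pose proof (Rabs_pos (Dint a Rb w t)). nra.
Qed.

Lemma inD_sub (z z0 : R -> R) :
  inD a Rb z -> inD a Rb z0 -> inD a Rb (fun s => z s - z0 s).
Proof.
  intros Hz Hz0.
  replace (fun s => z s - z0 s) with (fun s => z s + -1 * z0 s)
    by (apply functional_extensionality; intros; ring).
  now apply inD_linear.
Qed.

Lemma Rmap_sub (z z0 : R -> R) : inD a Rb z -> inD a Rb z0 ->
  Rmap a Rb (fun s => z s - z0 s) = (fun t => Rmap a Rb z t - Rmap a Rb z0 t).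
Proof.
  intros Hz Hz0.
  replace (fun s => z s - z0 s) with (fun s => z s + -1 * z0 s)
    by (apply functional_extensionality; intros; ring).
  rewrite Rmap_linear by assumption.
  apply functional_extensionality. intros. ring.
Qed.

End Transform.

Theorem lemma3p5 (a : nat) (Rb : R) (Ha : (1 <= a)%nat) (HR : 0 < Rb) :
  (* R^a(zeta) extends continuously and lands in C_{c,R}([0,oo)) *)
  (forall z, inD a Rb z -> inC Rb (Rmap a Rb z)) /\
  (* linearity *)
  (forall z1 z2 (c : R), inD a Rb z1 -> inD a Rb z2 ->
     Rmap a Rb (fun s => z1 s + c * z2 s) =
     (fun t => Rmap a Rb z1 t + c * Rmap a Rb z2 t)) /\
  (* injectivity *)
  (forall z1 z2, inD a Rb z1 -> inD a Rb z2 ->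
     Rmap a Rb z1 = Rmap a Rb z2 -> z1 = z2) /\
  (* surjectivity *)
  (forall f, inC Rb f -> exists z, inD a Rb z /\ Rmap a Rb z = f) /\
  (* continuity of R^a *)
  (forall z0, inD a Rb z0 -> forall eps, 0 < eps -> exists delta, 0 < delta /\
     forall z, inD a Rb z -> normD a Rb (fun s => z s - z0 s) < delta ->
       normC (fun t => Rmap a Rb z t - Rmap a Rb z0 t) < eps) /\
  (* continuity of the inverse *)
  (forall z0, inD a Rb z0 -> forall eps, 0 < eps -> exists delta, 0 < delta /\
     forall z, inD a Rb z ->
       normC (fun t => Rmap a Rb z t - Rmap a Rb z0 t) < delta ->
       normD a Rb (fun s => z s - z0 s) < eps).
Proof.
  destruct a as [|k]; [lia|].
  pose proof (pos_INR (S k)) as Hk.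
  split; [|split; [|split; [|split; [|split]]]].
  - intros z Hz. now apply Rmap_inC.
  - intros z1 z2 c Hz1 Hz2. now apply Rmap_linear.
  - intros z1 z2 Hz1 Hz2. now apply Rmap_inj.
  - intros f Hf. exists (Rmap_inv k Rb f).
    split; [now apply inD_Rmap_inv | now apply Rmap_Rmap_inv].
  - intros z0 Hz0 eps Heps. exists (eps / (INR (S k) + 1)).
    split; [apply Rdiv_lt_0_compat; lra|]. intros z Hz Hd.
    rewrite <- Rmap_sub by assumption.
    eapply Rle_lt_trans; [apply normC_Rmap_le; [exact HR | now apply inD_sub]|].
    replace eps with ((INR (S k) + 1) * (eps / (INR (S k) + 1))) by (field; lra).
    apply Rmult_lt_compat_l; lra.
  - intros z0 Hz0 eps Heps. exists (eps / 3). split; [lra|]. intros z Hz Hd.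
    rewrite <- Rmap_sub in Hd by assumption.
    eapply Rle_lt_trans; [apply normD_le_normC; [exact HR | now apply inD_sub] | lra].
Qed.
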